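(* Let $\mathcal X$ be a separable metric space with at least two points. Let $\varepsilon\in[0,1)$ and let $T$ be a test (a map from $\Delta^*$ to the open subsets of $\Omega$) such that $P(T(P))\le\varepsilon$ for every $P\in\Delta^*$. Then for every $\delta\in(0,1-\varepsilon]$ there exists a probability measure $\zeta$ on $\Delta^*$ with finite support such that $\zeta(\{P\in\Delta^*:\omega\notin T(P)\})\ge1-\varepsilon-\delta$ for every $\omega\in\Omega$.
   Context: $\Omega=\mathcal X^{\mathbb N}$ with the product topology; for $\omega\in\Omega$, $t\ge0$, $\omega^t$ is the cylinder of paths agreeing with $\omega$ in the first $t$ coordinates ($\omega^0=\Omega$); $\mathcal H$ is the set of all cylinders. $\Sigma$ is a $\sigma$-algebra on $\Omega$ containing all open sets; $\mathbb P$ is the set of finitely additive probabilities on $(\Omega,\Sigma)$; $P\in\mathbb P$ is strongly nonatomic if for every $E\in\Sigma$, $\alpha\in[0,1]$ there is $F\in\Sigma$, $F\subseteq E$, with $P(F)=\alpha P(E)$. A conditional probability is a function $P:\Sigma\times\mathcal H\to[0,1]$ such that for every $t\ge0$ and $\omega$: (1) $P(\cdot\mid\omega^t)\in\mathbb P$; (2) $P(\omega^t\mid\omega^t)=1$; (3) $P(E\cap\omega^{t+n}\mid\omega^t)=P(E\mid\omega^{t+n})P(\omega^{t+n}\mid\omega^t)$ for all $E\in\Sigma$, $n\ge0$. It is a conditional opinion if $P(\cdot\mid\Omega)$ is strongly nonatomic; $\Delta^*$ is the set of conditional opinions. We write $P(E)$ for $P(E\mid\Omega)$. *)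

From Stdlib Require Import Reals ClassicalEpsilon.
Open Scope R_scope.

Definition is_metric {X : Type} (d : X -> X -> R) : Prop :=
  (forall x y, 0 <= d x y) /\
  (forall x y, d x y = 0 <-> x = y) /\
  (forall x y, d x y = d y x) /\
  (forall x y z, d x z <= d x y + d y z).

Definition separable {X : Type} (d : X -> X -> R) : Prop :=
  exists s : nat -> X, forall x eps, 0 < eps -> exists n, d x (s n) < eps.

(* Path space Omega = X^N; subsets of Omega are predicates. *)
Definition path (X : Type) := nat -> X.
Definition pset (X : Type) := path X -> Prop.

Definition full {X : Type} : pset X := fun _ => True.

Definition cyl {X : Type} (t : nat) (w : path X) : pset X :=
  fun w' => forall i, (i < t)%nat -> w' i = w i.

(* Open sets of the product topology on X^N (X with metric d). *)
Definition is_open {X : Type} (d : X -> X -> R) (U : pset X) : Prop :=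
  forall w, U w -> exists (n : nat) (eps : R), 0 < eps /\
    forall w', (forall i, (i < n)%nat -> d (w i) (w' i) < eps) -> U w'.

Definition sigma_alg_opens {X : Type} (d : X -> X -> R) (Sigma : pset X -> Prop) : Prop :=
  Sigma full /\
  (forall E, Sigma E -> Sigma (fun w => ~ E w)) /\
  (forall A : nat -> pset X, (forall n, Sigma (A n)) -> Sigma (fun w => exists n, A n w)) /\
  (forall U, is_open d U -> Sigma U).

Definition fa_prob {X : Type} (Sigma : pset X -> Prop) (p : pset X -> R) : Prop :=
  (forall E, Sigma E -> 0 <= p E) /\
  p full = 1 /\
  (forall E F, Sigma E -> Sigma F -> (forall w, E w -> F w -> False) ->
     p (fun w => E w \/ F w) = p E + p F).

Definition strongly_nonatomic {X : Type} (Sigma : pset X -> Prop) (p : pset X -> R) : Prop :=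
  forall E alpha, Sigma E -> 0 <= alpha <= 1 ->
    exists F, Sigma F /\ (forall w, F w -> E w) /\ p F = alpha * p E.

(* Conditional probability: P E H = P(E | H), only meaningful for E in Sigma
   and H a cylinder. *)
Definition cond_prob {X : Type} (Sigma : pset X -> Prop) (P : pset X -> pset X -> R) : Prop :=
  forall (t : nat) (w : path X),
    fa_prob Sigma (fun E => P E (cyl t w)) /\
    P (cyl t w) (cyl t w) = 1 /\
    (forall E (n : nat), Sigma E ->
       P (fun x => E x /\ cyl (t + n) w x) (cyl t w)
       = P E (cyl (t + n) w) * P (cyl (t + n) w) (cyl t w)).

Definition cond_opinion {X : Type} (Sigma : pset X -> Prop) (P : pset X -> pset X -> R) : Prop :=
  cond_prob Sigma P /\ strongly_nonatomic Sigma (fun E => P E full).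

Definition DeltaStar {X : Type} (Sigma : pset X -> Prop) : Type :=
  { P : pset X -> pset X -> R | cond_opinion Sigma P }.

Definition uncond {X : Type} {Sigma : pset X -> Prop} (P : DeltaStar Sigma) (E : pset X) : R :=
  proj1_sig P E full.

Definition indic (A : Prop) : R :=
  if excluded_middle_informative A then 1 else 0.

Fixpoint fsum (n : nat) (f : nat -> R) : R :=
  match n with
  | O => 0
  | S m => fsum m f + f m
  end.

From Stdlib Require Import Reals Lra Lia List Cantor ClassicalEpsilon Classical
  FunctionalExtensionality PropExtensionality.
From mathcomp Require filter.
Open Scope R_scope.

(* If the statement fails, every finite mixture of the sets [T P] is hit with
   mass more than [eps + delta] by some path, and, the [T P] being open, by a path
   of a fixed countable dense family.  Multiplicative weights against these best
   responses give, for every finite list of opinions, finitely many dense paths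
   hitting each [T P] with frequency at least [a/b > eps].  Replacing each dense
   path by a sequence of distinct paths converging to it, the empirical measures
   of these sequences converge along an ultrafilter to a finitely additive
   probability that gives every open [T P] mass at least [a/b]; it is strongly
   nonatomic because a given fraction of the points of any set can be selected
   by a countable, hence measurable, rule.  Completed to a conditional opinion
   [P], it satisfies [P(T P) > eps]. *)

Lemma pset_ext {X : Type} (E F : pset X) : (forall w, E w <-> F w) -> E = F.
Proof.
  intros H. apply functional_extensionality. intros w. apply propositional_extensionality, H.
Qed.

Lemma nat_above r : exists N : nat, r < INR N.
Proof.
  destruct (Rlt_le_dec r 0) as [H|H]; [exists 0%nat; simpl; lra|].
  destruct (archimed r) as [H1 _].
  assert (Hup : (0 < up r)%Z) by (apply lt_IZR; simpl; lra).
  exists (Z.to_nat (up r)). rewrite INR_IZR_INZ, Znat.Z2Nat.id by lia. lra.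
Qed.

Lemma eventually_forall_lt (Q : nat -> nat -> Prop) (N : nat) :
  (forall t, (t < N)%nat -> exists K, forall k, (K <= k)%nat -> Q t k) ->
  exists K, forall t, (t < N)%nat -> forall k, (K <= k)%nat -> Q t k.
Proof.
  induction N as [|N IH]; intros H.
  - exists 0%nat. intros; lia.
  - destruct IH as [K1 H1]; [intros t Ht; apply H; lia|].
    destruct (H N ltac:(lia)) as [K2 H2].
    exists (Nat.max K1 K2). intros t Ht k Hk.
    destruct (Nat.eq_dec t N) as [->|Hne]; [apply H2|apply H1]; lia.
Qed.

Lemma fsum_ext n f g : (forall i, (i < n)%nat -> f i = g i) -> fsum n f = fsum n g.
Proof.
  induction n as [|n IH]; intros H; simpl; [reflexivity|].
  rewrite IH by (intros; apply H; lia). now rewrite H by lia.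
Qed.

Lemma fsum_add n f g : fsum n (fun i => f i + g i) = fsum n f + fsum n g.
Proof. induction n as [|n IH]; simpl; [ring|]. rewrite IH. ring. Qed.

Lemma fsum_scal n c f : fsum n (fun i => c * f i) = c * fsum n f.
Proof. induction n as [|n IH]; simpl; [ring|]. rewrite IH. ring. Qed.

Lemma fsum_const n c : fsum n (fun _ => c) = INR n * c.
Proof. induction n as [|n IH]; simpl fsum; [simpl; ring|]. rewrite IH, S_INR. ring. Qed.

Lemma fsum_le n f g : (forall i, (i < n)%nat -> f i <= g i) -> fsum n f <= fsum n g.
Proof.
  induction n as [|n IH]; intros H; simpl; [lra|].
  pose proof (H n ltac:(lia)). pose proof (IH ltac:(intros; apply H; lia)). lra.
Qed.

Lemma fsum_nonneg n f : (forall i, (i < n)%nat -> 0 <= f i) -> 0 <= fsum n f.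
Proof.
  intros H. rewrite <- (Rmult_0_r (INR n)), <- fsum_const. now apply fsum_le.
Qed.

Lemma fsum_le_bound n f B : (forall i, (i < n)%nat -> f i <= B) -> fsum n f <= INR n * B.
Proof. intros H. rewrite <- fsum_const. now apply fsum_le. Qed.

Lemma fsum_term_le n f j :
  (j < n)%nat -> (forall i, (i < n)%nat -> 0 <= f i) -> f j <= fsum n f.
Proof.
  induction n as [|n IH]; intros Hj H; [lia|]. simpl.
  destruct (Nat.eq_dec j n) as [->|Hne].
  - pose proof (fsum_nonneg n f ltac:(intros; apply H; lia)). lra.
  - pose proof (IH ltac:(lia) ltac:(intros; apply H; lia)). pose proof (H n ltac:(lia)). lra.
Qed.

Lemma indic_true (A : Prop) : A -> indic A = 1.
Proof. intros HA. unfold indic. destruct (excluded_middle_informative A); tauto. Qed.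

Lemma indic_false (A : Prop) : ~ A -> indic A = 0.
Proof. intros HA. unfold indic. destruct (excluded_middle_informative A); tauto. Qed.

Lemma indic_01 (A : Prop) : 0 <= indic A <= 1.
Proof. unfold indic. destruct (excluded_middle_informative A); lra. Qed.

Lemma indic_mono (A B : Prop) : (A -> B) -> indic A <= indic B.
Proof.
  intros H. destruct (classic A) as [HA|HA].
  - rewrite !indic_true by auto. lra.
  - rewrite (indic_false A) by auto. apply indic_01.
Qed.

Lemma indic_not (A : Prop) : indic (~ A) = 1 - indic A.
Proof.
  destruct (classic A) as [HA|HA].
  - rewrite indic_false, indic_true by tauto. ring.
  - rewrite indic_true, indic_false by tauto. ring.
Qed.

Lemma indic_or (A B : Prop) : ~ (A /\ B) -> indic (A \/ B) = indic A + indic B.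
Proof.
  intros Hd. destruct (classic A) as [HA|HA]; [|destruct (classic B) as [HB|HB]].
  - rewrite (indic_true (A \/ B)), (indic_true A), (indic_false B) by tauto. ring.
  - rewrite (indic_true (A \/ B)), (indic_false A), (indic_true B) by tauto. ring.
  - rewrite !indic_false by tauto. ring.
Qed.

(** * Ultrafilters and ultralimits *)

Record ultra {I : Type} (U : (I -> Prop) -> Prop) : Prop := {
  ultra_mono : forall A B : I -> Prop, (forall i, A i -> B i) -> U A -> U B;
  ultra_and : forall A B : I -> Prop, U A -> U B -> U (fun i => A i /\ B i);
  ultra_true : U (fun _ => True);
  ultra_not_false : ~ U (fun _ => False);
  ultra_or_not : forall A : I -> Prop, U A \/ U (fun i => ~ A i) }.

Lemma ultra_extend {I : Type} (F : (I -> Prop) -> Prop) :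
  (forall A B : I -> Prop, (forall i, A i -> B i) -> F A -> F B) ->
  (forall A B : I -> Prop, F A -> F B -> F (fun i => A i /\ B i)) ->
  F (fun _ => True) -> ~ F (fun _ => False) ->
  exists U, ultra U /\ forall A, F A -> U A.
Proof.
  intros Fmono Fand Ftrue Fproper.
  assert (PF : filter.ProperFilter F) by (constructor; [exact Fproper|constructor; auto]).
  destruct (filter.ultraFilterLemma PF) as [G [UG FG]].
  pose proof (@filter.ultra_proper _ _ UG) as PG.
  pose proof (@filter.filter_filter _ _ PG) as GF.
  exists G. split; [|exact FG]. constructor.
  - exact (@filter.filterS _ _ GF).
  - exact (@filter.filterI _ _ GF).
  - exact (@filter.filterT _ _ GF).
  - exact (@filter.filter_not_empty _ G PG).
  - intros A. exact (filter.in_ultra_setVsetC A UG).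
Qed.

Section Ultralimit.
Context {I : Type} (U : (I -> Prop) -> Prop) (HU : ultra U).

Lemma ultra_impl (A B : I -> Prop) : U A -> (forall i, A i -> B i) -> U B.
Proof. intros HA H. exact (ultra_mono U HU A B H HA). Qed.

Lemma ultra_impl2 (A B C : I -> Prop) :
  U A -> U B -> (forall i, A i -> B i -> C i) -> U C.
Proof.
  intros HA HB H. apply (ultra_impl _ _ (ultra_and U HU A B HA HB)).
  intros i [Ai Bi]. auto.
Qed.

Lemma ultra_witness A : U A -> exists i, A i.
Proof.
  intros HA. apply NNPP. intros Hn. apply (ultra_not_false U HU).
  apply (ultra_impl _ _ HA). intros i Ai. apply Hn. now exists i.
Qed.

Lemma ultra_forall (A : I -> Prop) : (forall i, A i) -> U A.
Proof. intros H. apply (ultra_impl _ _ (ultra_true U HU)). auto. Qed.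

Definition is_ulim (x : I -> R) (l : R) : Prop :=
  forall eta, 0 < eta -> U (fun i => Rabs (x i - l) < eta).

(* The limit along [U]; a junk value when [x] has no limit. *)
Definition ulim (x : I -> R) : R := epsilon (inhabits 0) (is_ulim x).

Definition ubounded (x : I -> R) : Prop := exists B, forall i, Rabs (x i) <= B.

Lemma is_ulim_unique x l l' : is_ulim x l -> is_ulim x l' -> l = l'.
Proof.
  intros H H'. apply NNPP; intros Hne.
  set (e := Rabs (l - l') / 2).
  assert (He : 0 < e) by (pose proof (Rabs_pos_lt (l - l') ltac:(lra)); unfold e; lra).
  destruct (ultra_witness _ (ultra_and U HU _ _ (H e He) (H' e He))) as [i [A B]].
  assert (Rabs (l - l') <= Rabs (x i - l) + Rabs (x i - l')).
  { replace (l - l') with (- (x i - l) + (x i - l')) by ring.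
    eapply Rle_trans; [apply Rabs_triang|]. rewrite Rabs_Ropp. lra. }
  unfold e in *. lra.
Qed.

Lemma ulim_eq x l : is_ulim x l -> ulim x = l.
Proof.
  intros H. apply (is_ulim_unique x); [|exact H].
  unfold ulim. apply epsilon_spec. now exists l.
Qed.

(* The limit is the supremum of the [r] such that [r <= x i] for [U]-most [i]. *)
Lemma is_ulim_exists x : ubounded x -> exists l, is_ulim x l.
Proof.
  intros [B HB].
  assert (HB' : forall i, - B <= x i <= B) by (intros i; pose proof (HB i); pose proof (Rle_abs (x i));
     pose proof (Rle_abs (- x i)); rewrite Rabs_Ropp in *; lra).
  set (S := fun r => U (fun i => r <= x i)).
  assert (Sbound : bound S).
  { exists B. intros r Sr. apply Rnot_lt_le. intros Hlt. apply (ultra_not_false U HU).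
    apply (ultra_impl _ _ Sr). intros i Hi. specialize (HB' i). lra. }
  assert (Sne : exists r, S r).
  { exists (- B). apply ultra_forall. intros i. apply HB'. }
  destruct (completeness S Sbound Sne) as [l [Hub Hlub]].
  exists l. intros eta Heta.
  assert (Hbelow : U (fun i => x i < l + eta / 2)).
  { destruct (ultra_or_not U HU (fun i => l + eta / 2 <= x i)) as [H|H].
    - specialize (Hub _ H). lra.
    - apply (ultra_impl _ _ H). intros i. apply Rnot_le_lt. }
  assert (Habove : exists r, S r /\ l - eta / 2 < r).
  { apply NNPP; intros Hn.
    assert (is_upper_bound S (l - eta / 2)).
    { intros r Sr. apply Rnot_lt_le. intros Hlt. apply Hn. now exists r. }
    specialize (Hlub _ H). lra. }
  destruct Habove as [r [Sr Hr]].
  apply (ultra_impl2 _ _ _ Hbelow Sr). intros i H1 H2. apply Rabs_def1; lra.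
Qed.

Lemma ulim_spec x : ubounded x -> is_ulim x (ulim x).
Proof.
  intros Hx. destruct (is_ulim_exists x Hx) as [l Hl]. now rewrite (ulim_eq x l Hl).
Qed.

Lemma ulim_close x y :
  ubounded x -> (forall eta, 0 < eta -> U (fun i => Rabs (x i - y i) < eta)) ->
  ulim y = ulim x.
Proof.
  intros Hx Hxy. apply ulim_eq. intros eta Heta.
  apply (ultra_impl2 _ _ _ (ulim_spec x Hx (eta / 2) ltac:(lra)) (Hxy (eta / 2) ltac:(lra))).
  intros i H1 H2.
  replace (y i - ulim x) with (- (x i - y i) + (x i - ulim x)) by ring.
  eapply Rle_lt_trans; [apply Rabs_triang|]. rewrite Rabs_Ropp. lra.
Qed.

Lemma ulim_ev_const x l : U (fun i => x i = l) -> ulim x = l.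
Proof.
  intros H. apply ulim_eq. intros eta Heta. apply (ultra_impl _ _ H).
  intros i ->. now rewrite Rminus_diag, Rabs_R0.
Qed.

Lemma ulim_add x y :
  ubounded x -> ubounded y -> ulim (fun i => x i + y i) = ulim x + ulim y.
Proof.
  intros Hx Hy. apply ulim_eq. intros eta Heta.
  apply (ultra_impl2 _ _ _ (ulim_spec x Hx (eta / 2) ltac:(lra))
    (ulim_spec y Hy (eta / 2) ltac:(lra))).
  intros i H1 H2.
  replace (x i + y i - (ulim x + ulim y)) with ((x i - ulim x) + (y i - ulim y)) by ring.
  eapply Rle_lt_trans; [apply Rabs_triang|]. lra.
Qed.

Lemma ulim_scal c x : ubounded x -> ulim (fun i => c * x i) = c * ulim x.
Proof.
  intros Hx. apply ulim_eq. intros eta Heta.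
  pose proof (Rabs_pos c) as Hc.
  assert (He : 0 < eta / (Rabs c + 1)) by (apply Rdiv_lt_0_compat; lra).
  apply (ultra_impl _ _ (ulim_spec x Hx _ He)). intros i Hi.
  replace (c * x i - c * ulim x) with (c * (x i - ulim x)) by ring.
  rewrite Rabs_mult.
  apply Rle_lt_trans with (Rabs c * (eta / (Rabs c + 1))).
  - apply Rmult_le_compat_l; lra.
  - apply (Rmult_lt_reg_r (Rabs c + 1)); [lra|].
    replace (Rabs c * (eta / (Rabs c + 1)) * (Rabs c + 1)) with (Rabs c * eta)
      by (field; lra). nra.
Qed.

Lemma ulim_ge x r : ubounded x -> U (fun i => r <= x i) -> r <= ulim x.
Proof.
  intros Hx H. apply Rnot_lt_le. intros Hlt.
  destruct (ultra_witness _ (ultra_and U HU _ _ (ulim_spec x Hx (r - ulim x) ltac:(lra)) H))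
    as [i [Hi Hr]].
  apply Rabs_def2 in Hi. lra.
Qed.

End Ultralimit.
(** * Multiplicative weights *)

Lemma bernoulli_pow h n : 0 <= h <= 1 -> 1 - INR n * h <= (1 - h) ^ n.
Proof.
  intros Hh. induction n as [|n IH]; [simpl; lra|]. rewrite S_INR. cbn [pow].
  assert (0 <= (1 - h) ^ n) by (apply pow_le; lra). pose proof (pos_INR n). nra.
Qed.

Lemma pow_one_minus_le x n :
  0 <= x <= 1 -> (1 - x) ^ n <= 1 - INR n * x + INR n * INR n * x * x / 2.
Proof.
  intros Hx. induction n as [|n IH]; [simpl; lra|]. rewrite S_INR. cbn [pow].
  pose proof (pos_INR n). set (k := INR n) in *.
  apply Rle_trans with ((1 - x) * (1 - k * x + k * k * x * x / 2)).
  - apply Rmult_le_compat_l; lra.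
  - assert (0 <= k * k * x * x * x) by (repeat apply Rmult_le_pos; lra). nra.
Qed.

(* Take [beta = 1 - h] with [h] small; compare both sides through Bernoulli's
   inequality and its second-order converse. *)
Lemma mw_rate_gap c (a b : nat) :
  0 < c <= 1 -> (1 <= b)%nat -> INR a < INR b * c ->
  exists beta, 0 < beta < 1 /\ (1 - (1 - beta) * c) ^ b < beta ^ a.
Proof.
  intros Hc Hb Hab.
  assert (Hb1 : 1 <= INR b) by (apply (le_INR 1); exact Hb).
  pose proof (pos_INR a) as Ha0.
  set (h := Rmin (1 / 2) ((INR b * c - INR a) / (INR b * INR b))).
  assert (Hh : 0 < h <= 1 / 2).
  { split; [apply Rmin_glb_lt; [lra|apply Rdiv_lt_0_compat; nra]|apply Rmin_l]. }
  assert (Hhb : h * (INR b * INR b) <= INR b * c - INR a).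
  { pose proof (Rmin_r (1 / 2) ((INR b * c - INR a) / (INR b * INR b))) as H.
    fold h in H. apply (Rmult_le_compat_r (INR b * INR b)) in H; [|nra].
    replace ((INR b * c - INR a) / (INR b * INR b) * (INR b * INR b))
      with (INR b * c - INR a) in H by (field; lra). exact H. }
  exists (1 - h). split; [lra|].
  replace (1 - (1 - (1 - h)) * c) with (1 - h * c) by ring.
  pose proof (pow_one_minus_le (h * c) b ltac:(split; nra)) as Hup.
  pose proof (bernoulli_pow h a ltac:(lra)) as Hlow.
  assert (INR b * INR b * (h * c) * (h * c) / 2 < h * (INR b * c - INR a)).
  { assert (INR b * INR b * (h * c) * (h * c) <= h * (h * (INR b * INR b))).
    { assert (c * c <= 1) by nra. assert (0 <= h * h * (INR b * INR b)) by nra. nra. }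
    assert (h * (h * (INR b * INR b)) <= h * (INR b * c - INR a))
      by (apply Rmult_le_compat_l; lra).
    assert (0 < h * (INR b * c - INR a)) by nra. lra. }
  nra.
Qed.

Section MultiplicativeWeights.
Variables (M : nat) (Rel : nat -> nat -> Prop) (c : R).
Hypothesis Hbest : forall wt : nat -> R,
  (forall j, (j < M)%nat -> 0 <= wt j) -> fsum M wt = 1 ->
  exists m, c < fsum M (fun j => wt j * indic (Rel j m)).

Definition best_response (wt : nat -> R) : nat :=
  epsilon (inhabits 0%nat) (fun m => c < fsum M (fun j => wt j * indic (Rel j m))).

Hypothesis Hc1 : c <= 1.
Variable beta : R.
Hypothesis Hbeta : 0 < beta < 1.
Hypothesis HM : (0 < M)%nat.

Definition potential (hits : nat -> nat) : R := fsum M (fun j => beta ^ hits j).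

Definition mw_weights (hits : nat -> nat) (j : nat) : R := beta ^ hits j / potential hits.

Fixpoint mw_hits (t : nat) : nat -> nat :=
  match t with
  | O => fun _ => O
  | S t => fun j => (mw_hits t j +
      if excluded_middle_informative (Rel j (best_response (mw_weights (mw_hits t))))
      then 1 else 0)%nat
  end.

Definition mw_play (t : nat) : nat := best_response (mw_weights (mw_hits t)).

Lemma mw_hits_count N j : INR (mw_hits N j) = fsum N (fun t => indic (Rel j (mw_play t))).
Proof.
  induction N as [|N IH]; [reflexivity|]. simpl mw_hits. simpl fsum.
  rewrite plus_INR, IH. unfold indic, mw_play.
  destruct (excluded_middle_informative _); simpl; ring.
Qed.

Lemma potential_pos hits : 0 < potential hits.
Proof.
  apply Rlt_le_trans with (beta ^ hits 0%nat); [apply pow_lt; lra|].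
  apply (fsum_term_le M (fun j => beta ^ hits j)); [exact HM|].
  intros; apply pow_le; lra.
Qed.

Lemma potential_step t :
  potential (mw_hits (S t)) <= (1 - (1 - beta) * c) * potential (mw_hits t).
Proof.
  set (hits := mw_hits t).
  pose proof (potential_pos hits) as Hpos.
  assert (Hw : forall j, (j < M)%nat -> 0 <= mw_weights hits j).
  { intros j _. apply Rle_mult_inv_pos; [apply pow_le; lra|exact Hpos]. }
  assert (Hsum : fsum M (mw_weights hits) = 1).
  { unfold mw_weights, Rdiv.
    rewrite (fsum_ext M _ (fun j => / potential hits * beta ^ hits j)) by (intros; ring).
    rewrite fsum_scal. fold (potential hits). field. lra. }
  set (m := mw_play t).
  assert (Hm : c < fsum M (fun j => mw_weights hits j * indic (Rel j m))).
  { exact (epsilon_spec (inhabits 0%nat) _ (Hbest _ Hw Hsum)). }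
  assert (Hnext : potential (mw_hits (S t)) = potential hits -
      (1 - beta) * fsum M (fun j => beta ^ hits j * indic (Rel j m))).
  { replace (potential hits - (1 - beta) * fsum M (fun j => beta ^ hits j * indic (Rel j m)))
      with (fsum M (fun j => beta ^ hits j + (- (1 - beta)) * (beta ^ hits j * indic (Rel j m))))
      by (rewrite fsum_add, fsum_scal; unfold potential; ring).
    apply fsum_ext. intros j _. simpl mw_hits. fold hits.
    change (best_response (mw_weights hits)) with m.
    rewrite pow_add. unfold indic.
    destruct (excluded_middle_informative (Rel j m)); simpl; ring. }
  assert (Hrescale : fsum M (fun j => beta ^ hits j * indic (Rel j m)) =
      potential hits * fsum M (fun j => mw_weights hits j * indic (Rel j m))).
  { rewrite <- fsum_scal. apply fsum_ext. intros j _. unfold mw_weights. field. lra. }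
  rewrite Hnext, Hrescale.
  assert (0 <= (1 - beta) * potential hits *
      (fsum M (fun j => mw_weights hits j * indic (Rel j m)) - c))
    by (repeat apply Rmult_le_pos; lra).
  nra.
Qed.

Lemma potential_le N : potential (mw_hits N) <= (1 - (1 - beta) * c) ^ N * INR M.
Proof.
  induction N as [|N IH].
  - unfold potential. simpl mw_hits. rewrite fsum_const. simpl. lra.
  - apply Rle_trans with ((1 - (1 - beta) * c) * potential (mw_hits N));
      [apply potential_step|].
    simpl pow. rewrite Rmult_assoc. apply Rmult_le_compat_l; [|exact IH].
    nra.
Qed.

Lemma mw_hits_rate N j :
  (j < M)%nat -> beta ^ mw_hits N j <= (1 - (1 - beta) * c) ^ N * INR M.
Proof.
  intros Hj. eapply Rle_trans; [|apply potential_le].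
  apply (fsum_term_le M (fun j => beta ^ mw_hits N j)); [exact Hj|].
  intros; apply pow_le; lra.
Qed.

End MultiplicativeWeights.

Lemma pow_le_of_ge x m n : 0 <= x <= 1 -> (m <= n)%nat -> x ^ n <= x ^ m.
Proof.
  intros Hx Hmn. replace n with (m + (n - m))%nat by lia. rewrite pow_add.
  assert (0 <= x ^ m) by (apply pow_le; lra).
  assert (x ^ (n - m) <= 1) by (rewrite <- (pow1 (n - m)); apply pow_incr; lra).
  nra.
Qed.

(* Multiplicative weights on the rows [j], played against best-responding
   columns [m]. *)
Lemma uniform_hitting_plays (M : nat) (Rel : nat -> nat -> Prop) (c : R) (a b : nat) :
  0 < c <= 1 -> (1 <= b)%nat -> INR a < INR b * c ->
  (forall wt : nat -> R, (forall j, (j < M)%nat -> 0 <= wt j) -> fsum M wt = 1 ->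
     exists m, c < fsum M (fun j => wt j * indic (Rel j m))) ->
  exists (N : nat) (ms : nat -> nat), (0 < N)%nat /\
    forall j, (j < M)%nat -> INR a * INR N <= INR b * fsum N (fun t => indic (Rel j (ms t))).
Proof.
  intros Hc Hb Hab Hbest.
  destruct (Nat.eq_0_gt_0_cases M) as [->|HM].
  { exists 1%nat, (fun _ => 0%nat). split; [lia|]. intros; lia. }
  destruct (mw_rate_gap c a b Hc Hb Hab) as [beta [Hbeta Hgap]].
  set (gam := 1 - (1 - beta) * c) in Hgap.
  assert (Hgam : 0 <= gam) by (unfold gam; nra).
  assert (Hba : 0 < beta ^ a) by (apply pow_lt; lra).
  set (rho := gam ^ b / beta ^ a).
  assert (Hrho : 0 <= rho < 1).
  { unfold rho. split; [apply Rle_mult_inv_pos; [apply pow_le|]; lra|].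
    apply (Rmult_lt_reg_r (beta ^ a)); [lra|]. field_simplify; lra. }
  assert (HMpos : 0 < INR M) by (apply lt_0_INR; lia).
  destruct (pow_lt_1_zero rho ltac:(rewrite Rabs_pos_eq; lra) (/ INR M)
    ltac:(apply Rinv_0_lt_compat; lra)) as [r0 Hr0].
  set (r := S r0).
  specialize (Hr0 r ltac:(unfold r; lia)). rewrite Rabs_pos_eq in Hr0 by (apply pow_le; lra).
  exists (b * r)%nat, (mw_play M Rel c beta).
  split; [unfold r; nia|]. intros j Hj.
  set (hits := mw_hits M Rel c beta (b * r) j).
  assert (Hrate : beta ^ hits < beta ^ (a * r)).
  { eapply Rle_lt_trans; [apply (mw_hits_rate M Rel c Hbest ltac:(lra) beta Hbeta HM _ j Hj)|].
    fold gam. rewrite !pow_mult.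
    replace (gam ^ b) with (rho * beta ^ a) by (unfold rho; field; lra).
    rewrite Rpow_mult_distr.
    assert (0 < (beta ^ a) ^ r) by (apply pow_lt; lra).
    apply (Rmult_lt_compat_r (INR M)) in Hr0; [|lra]. rewrite Rinv_l in Hr0 by lra.
    assert (0 <= rho ^ r) by (apply pow_le; lra). nra. }
  assert (Hcount : (a * r <= hits)%nat).
  { destruct (Nat.le_gt_cases (a * r) hits) as [H|H]; [exact H|].
    pose proof (pow_le_of_ge beta hits (a * r) ltac:(lra) ltac:(lia)). lra. }
  apply le_INR in Hcount. unfold hits in Hcount. rewrite mw_hits_count in Hcount.
  rewrite !mult_INR in *. pose proof (pos_INR b). nra.
Qed.

(** * Paths approaching a countable dense family *)

Section Paths.
Variables (X : Type) (d : X -> X -> R).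
Hypothesis Hmetric : is_metric d.

Lemma dist_refl x : d x x = 0.
Proof. destruct Hmetric as [_ [H _]]. now apply H. Qed.

Lemma dist_pos x y : x <> y -> 0 < d x y.
Proof.
  intros Hne. destruct Hmetric as [H0 [H _]].
  destruct (H0 x y) as [Hlt|Heq]; [exact Hlt|]. exfalso. apply Hne, H. auto.
Qed.

(* Tying the radius to the prefix length makes these neighbourhoods shrink with
   [k], so that finitely many of them can be intersected. *)
Lemma open_prefix_ball (U : pset X) (w : path X) :
  is_open d U -> U w ->
  exists K, forall k, (K <= k)%nat ->
    forall w', (forall i, (i < k)%nat -> d (w i) (w' i) < / INR (S k)) -> U w'.
Proof.
  intros HU Hw. destruct (HU w Hw) as [n [e [He Hball]]].
  destruct (nat_above (/ e)) as [K0 HK0].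
  exists (Nat.max n K0). intros k Hk w' Hw'. apply Hball. intros i Hi.
  apply Rlt_le_trans with (/ INR (S k)); [apply Hw'; lia|].
  assert (INR K0 <= INR k) by (apply le_INR; lia).
  rewrite S_INR. rewrite <- (Rinv_inv e). apply Rinv_le_contravar.
  - apply Rinv_0_lt_compat, He.
  - lra.
Qed.

Lemma open_neq (z : path X) : is_open d (fun w => w <> z).
Proof.
  intros w Hw.
  assert (Hi : exists i, w i <> z i).
  { apply NNPP. intros Hn. apply Hw, functional_extensionality. intros i.
    apply NNPP. intros Hi. apply Hn. now exists i. }
  destruct Hi as [i Hi]. exists (S i), (d (w i) (z i)). split; [now apply dist_pos|].
  intros w' Hw' ->. specialize (Hw' i ltac:(lia)). lra.
Qed.

Variable s : nat -> X.
Hypothesis Hdense : forall x eps, 0 < eps -> exists n, d x (s n) < eps.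

(* [coord i m] is the [i]-th component of [m], read as an infinite sequence of
   naturals through iterated Cantor unpairing. *)
Fixpoint coord (i m : nat) : nat :=
  match i with
  | O => fst (of_nat m)
  | S i => coord i (snd (of_nat m))
  end.

Definition dense_path (m : nat) : path X := fun i => s (coord i m).

Lemma dense_path_approx n (w : path X) e :
  0 < e -> exists m, forall i, (i < n)%nat -> d (w i) (dense_path m i) < e.
Proof.
  revert w. induction n as [|n IH]; intros w He.
  - exists 0%nat. intros; lia.
  - destruct (Hdense (w 0%nat) e He) as [k Hk].
    destruct (IH (fun i => w (S i)) He) as [m Hm].
    exists (to_nat (k, m)). intros [|i] Hi; unfold dense_path; cbn [coord];
      rewrite cancel_of_to; cbn [fst snd].
    + exact Hk.
    + apply (Hm i). lia.
Qed.

Lemma dense_path_in_opens (M : nat) (Ts : nat -> pset X) (w : path X) :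
  (forall j, is_open d (Ts j)) ->
  exists m, forall j, (j < M)%nat -> Ts j w -> Ts j (dense_path m).
Proof.
  intros Hopen.
  destruct (eventually_forall_lt (fun j k => Ts j w -> forall w',
      (forall i, (i < k)%nat -> d (w i) (w' i) < / INR (S k)) -> Ts j w') M) as [K HK].
  { intros j _. destruct (classic (Ts j w)) as [Hin|Hout].
    - destruct (open_prefix_ball (Ts j) w (Hopen j) Hin) as [K HK].
      exists K. intros k Hk _. now apply HK.
    - exists 0%nat. intros k _ Hin. contradiction. }
  destruct (dense_path_approx K w (/ INR (S K)) ltac:(apply Rinv_0_lt_compat, lt_0_INR; lia))
    as [m Hm].
  exists m. intros j Hj Hin. exact (HK j Hj K (le_n K) Hin _ Hm).
Qed.

Variables xa xb : X.
Hypothesis Hxab : xa <> xb.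

(* A path that agrees with [dense_path m] on the first [k] coordinates and then
   records [(m, k)] by the position of its last [xb]. *)
Definition approach (m k : nat) : path X := fun i =>
  if Nat.ltb i k then dense_path m i
  else if Nat.eqb i (to_nat (m, k)) then xb else xa.

Lemma le_to_nat m k : (k <= to_nat (m, k))%nat.
Proof. cbn [to_nat]. lia. Qed.

Lemma approach_marker m k : approach m k (to_nat (m, k)) = xb.
Proof.
  unfold approach. pose proof (le_to_nat m k).
  destruct (Nat.ltb_spec (to_nat (m, k)) k); [lia|]. now rewrite Nat.eqb_refl.
Qed.

Lemma approach_after_marker m k i : (to_nat (m, k) < i)%nat -> approach m k i = xa.
Proof.
  intros Hi. unfold approach. pose proof (le_to_nat m k).
  destruct (Nat.ltb_spec i k); [lia|]. destruct (Nat.eqb_spec i (to_nat (m, k))); [lia|auto].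
Qed.

Lemma approach_inj m k m' k' : approach m k = approach m' k' -> m = m' /\ k = k'.
Proof.
  intros E.
  assert (Hmark : to_nat (m, k) = to_nat (m', k')).
  { destruct (Nat.lt_total (to_nat (m, k)) (to_nat (m', k'))) as [Hl|[He|Hl]]; auto; exfalso.
    - pose proof (approach_marker m' k') as A. rewrite <- E, approach_after_marker in A; auto.
    - pose proof (approach_marker m k) as A. rewrite E, approach_after_marker in A; auto. }
  apply to_nat_inj in Hmark. now injection Hmark.
Qed.

Lemma approach_eventually_in (U : pset X) m :
  is_open d U -> U (dense_path m) -> exists K, forall k, (K <= k)%nat -> U (approach m k).
Proof.
  intros HU Hin. destruct (open_prefix_ball U _ HU Hin) as [K HK].
  exists K. intros k Hk. apply (HK k Hk). intros i Hi.
  unfold approach. destruct (Nat.ltb_spec i k); [|lia].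
  rewrite dist_refl. apply Rinv_0_lt_compat, lt_0_INR. lia.
Qed.

Variable Sig : pset X -> Prop.
Hypothesis HSigma : sigma_alg_opens d Sig.

Lemma Sig_ext (E F : pset X) : (forall w, E w <-> F w) -> Sig E -> Sig F.
Proof. intros H. now rewrite (pset_ext E F H). Qed.

Lemma Sig_point_if (z : path X) (Q : Prop) : Sig (fun w => w = z /\ Q).
Proof.
  destruct HSigma as [Hfull [Hcompl [_ Hopen]]].
  destruct (classic Q) as [HQ|HQ].
  - apply (Sig_ext (fun w => ~ (w <> z))).
    + intros w. split; [intros H; split; [now apply NNPP|exact HQ]|tauto].
    + now apply Hcompl, Hopen, open_neq.
  - apply (Sig_ext (fun w => ~ full w)); [unfold full; tauto|]. now apply Hcompl.
Qed.

Lemma Sig_approach_set (Q : nat -> nat -> Prop) :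
  Sig (fun w => exists m k, w = approach m k /\ Q m k).
Proof.
  destruct HSigma as [_ [_ [Hunion _]]].
  apply (Hunion (fun m w => exists k, w = approach m k /\ Q m k)). intros m.
  apply (Hunion (fun k w => w = approach m k /\ Q m k)). intros k.
  apply Sig_point_if.
Qed.

End Paths.

(** * Conditional opinions extending a finitely additive probability *)

Section ConditionalExtension.
Variables (X : Type) (Sig : pset X -> Prop) (xa xb : X).
Hypothesis Hxab : xa <> xb.
Variable p : pset X -> R.
Hypothesis Hp0 : forall E, 0 <= p E.
Hypothesis Hp1 : p full = 1.
Hypothesis Hpadd : forall E F : pset X,
  (forall w, E w -> F w -> False) -> p (fun w => E w \/ F w) = p E + p F.
Hypothesis Hsn : strongly_nonatomic Sig p.

Lemma p_mono (E F : pset X) : (forall w, E w -> F w) -> p E <= p F.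
Proof.
  intros H. replace F with (fun w => E w \/ (F w /\ ~ E w)).
  - rewrite Hpadd by tauto. pose proof (Hp0 (fun w => F w /\ ~ E w)). lra.
  - apply pset_ext. intros w. split; [intros [A|[A _]]; auto|].
    intros A. destruct (classic (E w)); tauto.
Qed.

Lemma cyl_sub_length (t : nat) (w : path X) (t' : nat) (w' : path X) : (forall v, cyl t w v -> cyl t' w' v) -> (t' <= t)%nat.
Proof.
  intros Hsub. apply Nat.nlt_ge. intros Hlt.
  set (y := if excluded_middle_informative (w t = xa) then xb else xa).
  assert (Hy : y <> w t).
  { unfold y. destruct (excluded_middle_informative (w t = xa)); congruence. }
  set (v := fun i => if Nat.eqb i t then y else w i).
  assert (Hv : cyl t w v).
  { intros i Hi. unfold v. destruct (Nat.eqb_spec i t); [lia|reflexivity]. }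
  pose proof (Hsub v Hv t Hlt) as A. pose proof (Hsub w (fun _ _ => eq_refl) t Hlt) as B.
  unfold v in A. rewrite Nat.eqb_refl in A. congruence.
Qed.

Definition pad (t : nat) (w : path X) : path X := fun i => if Nat.ltb i t then w i else xa.

Lemma pad_in_cyl t w : cyl t w (pad t w).
Proof. intros i Hi. unfold pad. destruct (Nat.ltb_spec i t); [reflexivity|lia]. Qed.

Lemma pad_cyl_eq t w t' w' : cyl t w = cyl t' w' -> pad t w = pad t' w'.
Proof.
  intros E.
  assert (t = t') as <-.
  { apply Nat.le_antisymm; [apply (cyl_sub_length t' w' t w)|apply (cyl_sub_length t w t' w')];
      intros v; rewrite E; auto. }
  assert (Hw : cyl t w' w) by (rewrite <- E; intros i _; reflexivity).
  apply functional_extensionality. intros i. unfold pad.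
  destruct (Nat.ltb_spec i t); auto.
Qed.

(* A canonical point of a cylinder, independent of the way it is presented. *)
Definition canon (C : pset X) : path X :=
  match excluded_middle_informative (exists tw : nat * path X, C = cyl (fst tw) (snd tw)) with
  | left e => let tw := proj1_sig (constructive_indefinite_description _ e) in
              pad (fst tw) (snd tw)
  | right _ => fun _ => xa
  end.

Lemma canon_cyl t w : canon (cyl t w) = pad t w.
Proof.
  unfold canon. destruct (excluded_middle_informative _) as [e|n].
  - destruct (constructive_indefinite_description _ e) as [[t' w'] E]. cbn.
    symmetry. now apply pad_cyl_eq.
  - exfalso. apply n. now exists (t, w).
Qed.

Lemma pad_refine t n w : cyl (t + n) w (pad t w) -> pad (t + n) w = pad t w.
Proof.
  intros Hin. apply functional_extensionality. intros i. unfold pad at 1.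
  destruct (Nat.ltb_spec i (t + n)) as [Hi|Hi].
  - symmetry. now apply Hin.
  - unfold pad. destruct (Nat.ltb_spec i t); [lia|reflexivity].
Qed.

(* Conditioning on a null cylinder falls back on the point mass at its
   canonical point. *)
Definition pcond (E C : pset X) : R :=
  if Rlt_dec 0 (p C) then p (fun w => E w /\ C w) / p C else indic (E (canon C)).

Lemma pcond_full E : pcond E full = p E.
Proof.
  unfold pcond. rewrite Hp1. destruct (Rlt_dec 0 1); [|lra].
  replace (fun w => E w /\ full w) with E; [field|].
  apply pset_ext. unfold full. tauto.
Qed.

Lemma pcond_fa_prob C : fa_prob Sig (fun E => pcond E C).
Proof.
  unfold pcond. destruct (Rlt_dec 0 (p C)) as [HC|HC]; split; [|split| |split].
  - intros E _. apply Rle_mult_inv_pos; [apply Hp0|exact HC].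
  - replace (fun w => full w /\ C w) with C; [field; lra|]. apply pset_ext. unfold full. tauto.
  - intros E F _ _ Hd.
    replace (fun w => (E w \/ F w) /\ C w) with (fun w => (E w /\ C w) \/ (F w /\ C w))
      by (apply pset_ext; tauto).
    rewrite Hpadd by (intros w [A _] [B _]; eauto). field. lra.
  - intros E _. apply indic_01.
  - now apply indic_true.
  - intros E F _ _ Hd. apply indic_or. intros [A B]. eauto.
Qed.

Lemma pcond_cyl_self t w : pcond (cyl t w) (cyl t w) = 1.
Proof.
  unfold pcond. destruct (Rlt_dec 0 (p (cyl t w))).
  - replace (fun v => cyl t w v /\ cyl t w v) with (cyl t w) by (apply pset_ext; tauto).
    field. lra.
  - apply indic_true. rewrite canon_cyl. apply pad_in_cyl.
Qed.

Lemma pcond_chain t n w E :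
  pcond (fun v => E v /\ cyl (t + n) w v) (cyl t w)
  = pcond E (cyl (t + n) w) * pcond (cyl (t + n) w) (cyl t w).
Proof.
  set (C := cyl t w). set (C' := cyl (t + n) w).
  assert (Hsub : forall v, C' v -> C v) by (intros v Hv i Hi; apply Hv; lia).
  assert (HEC : (fun v => (E v /\ C' v) /\ C v) = (fun v => E v /\ C' v))
    by (apply pset_ext; intros v; split; [tauto|intros [A B]; auto]).
  assert (HCC : (fun v => C' v /\ C v) = C') by (apply pset_ext; intros v; split; [tauto|auto]).
  assert (HCC' : p C' <= p C) by (apply p_mono; auto).
  unfold pcond. rewrite HEC, HCC.
  destruct (Rlt_dec 0 (p C)) as [HC|HC]; destruct (Rlt_dec 0 (p C')) as [HC'|HC'].
  - field. lra.
  - assert (HC0 : p C' = 0) by (pose proof (Hp0 C'); lra).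
    assert (Hnull : p (fun v => E v /\ C' v) = 0).
    { pose proof (Hp0 (fun v => E v /\ C' v)).
      assert (p (fun v => E v /\ C' v) <= p C') by (apply p_mono; tauto). lra. }
    rewrite Hnull, HC0. unfold Rdiv. ring.
  - lra.
  - unfold C, C'. rewrite !canon_cyl.
    destruct (classic (cyl (t + n) w (pad t w))) as [Hin|Hout].
    + rewrite (indic_true (cyl (t + n) w _)), pad_refine, Rmult_1_r by auto.
      f_equal. apply propositional_extensionality. tauto.
    + rewrite (indic_false (cyl (t + n) w _)), indic_false by tauto. ring.
Qed.

Lemma extend_to_opinion : exists P : DeltaStar Sig, forall E, uncond P E = p E.
Proof.
  assert (HP : cond_opinion Sig pcond).
  { split.
    - intros t w. split; [apply pcond_fa_prob|split; [apply pcond_cyl_self|]].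
      intros E n _. apply pcond_chain.
    - replace (fun E => pcond E full) with p; [exact Hsn|].
      apply functional_extensionality. intros E. symmetry. apply pcond_full. }
  exists (exist _ pcond HP). intros E. apply pcond_full.
Qed.

End ConditionalExtension.

(** * Empirical measures along approaching paths *)

Lemma Int_part_0 : Int_part 0 = 0%Z.
Proof.
  destruct (base_Int_part 0) as [A B].
  assert (Int_part 0 <= 0)%Z by (apply le_IZR; lra).
  assert (-1 < Int_part 0)%Z by (apply lt_IZR; simpl; lra). lia.
Qed.

Lemma Int_part_step (al x : R) : 0 <= al <= 1 ->
  IZR (Int_part (al * (x + 1))) =
  IZR (Int_part (al * x)) + indic (Int_part (al * (x + 1)) <> Int_part (al * x)).
Proof.
  intros Hal.
  destruct (base_Int_part (al * (x + 1))) as [A1 B1]. destruct (base_Int_part (al * x)) as [A0 B0].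
  set (n1 := Int_part (al * (x + 1))) in *. set (n0 := Int_part (al * x)) in *.
  assert (L1 : (-1 < n1 - n0)%Z) by (apply lt_IZR; rewrite minus_IZR; simpl; nra).
  assert (L2 : (n1 - n0 < 2)%Z) by (apply lt_IZR; rewrite minus_IZR; simpl; nra).
  destruct (Z.eq_dec n1 n0) as [E|E].
  - rewrite indic_false by tauto. rewrite E. ring.
  - rewrite indic_true by tauto. replace n1 with (n0 + 1)%Z by lia. rewrite plus_IZR. ring.
Qed.

Record sample : Type := Sample { size : nat; pts : nat -> nat; horizon : nat }.

Section Empirical.
Variables (X : Type) (d : X -> X -> R).
Hypothesis Hmetric : is_metric d.
Variables (s : nat -> X) (xa xb : X).
Hypothesis Hxab : xa <> xb.

Notation approach := (approach X s xa xb).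

Definition visits (m : nat) (E : pset X) (k : nat) : R :=
  fsum k (fun k' => indic (E (approach m k'))).

Lemma visits_bounds m E k : 0 <= visits m E k <= INR k.
Proof.
  split; [apply fsum_nonneg|rewrite <- (Rmult_1_r (INR k)); apply fsum_le_bound];
    intros; apply indic_01.
Qed.

Lemma visits_or m E F k : (forall w, E w -> F w -> False) ->
  visits m (fun w => E w \/ F w) k = visits m E k + visits m F k.
Proof.
  intros Hd. unfold visits. rewrite <- fsum_add. apply fsum_ext. intros k' _.
  apply indic_or. intros [A B]. eauto.
Qed.

Lemma visits_tail m (E : pset X) K :
  (forall k, (K <= k)%nat -> E (approach m k)) -> forall n, INR n - INR K <= visits m E n.
Proof.
  intros HK n. induction n as [|n IH].
  - pose proof (pos_INR K). unfold visits. simpl. lra.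
  - unfold visits in *. simpl fsum. rewrite S_INR.
    destruct (Nat.le_gt_cases K n) as [Hl|Hl].
    + rewrite indic_true by auto. lra.
    + assert (INR n + 1 <= INR K) by (rewrite <- S_INR; apply le_INR; lia).
      pose proof (visits_bounds m E n). pose proof (indic_01 (E (approach m n))).
      unfold visits in *. lra.
Qed.

(* Keep the [j]-th visit of [E] along [approach m] exactly when [al * j] crosses
   an integer, so that a fraction [al] of the visits is kept. *)
Definition select (E : pset X) (al : R) : pset X := fun w =>
  E w /\ exists m k, w = approach m k /\
    Int_part (al * (visits m E k + 1)) <> Int_part (al * visits m E k).

Lemma select_approach E al m k : select E al (approach m k) <->
  E (approach m k) /\ Int_part (al * (visits m E k + 1)) <> Int_part (al * visits m E k).
Proof.
  split.
  - intros [HE [m' [k' [Heq J]]]].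
    destruct (approach_inj X s xa xb Hxab _ _ _ _ Heq) as [-> ->]. auto.
  - intros [HE J]. split; [exact HE|]. now exists m, k.
Qed.

Lemma visits_select E al m n :
  0 <= al <= 1 -> visits m (select E al) n = IZR (Int_part (al * visits m E n)).
Proof.
  intros Hal. induction n as [|n IH].
  - unfold visits. simpl. now rewrite Rmult_0_r, Int_part_0.
  - unfold visits in *. simpl fsum. rewrite IH.
    destruct (classic (E (approach m n))) as [HE|HE].
    + rewrite (indic_true (E _)), Int_part_step by auto. f_equal.
      apply f_equal, propositional_extensionality.
      rewrite select_approach. unfold visits. tauto.
    + rewrite (indic_false (E _)), indic_false, !Rplus_0_r by (rewrite ?select_approach; tauto).
      reflexivity.
Qed.

Variable Sig : pset X -> Prop.
Hypothesis HSigma : sigma_alg_opens d Sig.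

Lemma Sig_select E al : Sig (select E al).
Proof.
  apply (Sig_ext X Sig (fun w => exists m k, w = approach m k /\
    (E (approach m k) /\ Int_part (al * (visits m E k + 1)) <> Int_part (al * visits m E k)))).
  - intros w. split.
    + intros [m [k [-> H]]]. now apply select_approach.
    + intros [HE [m [k [-> J]]]]. exists m, k. auto.
  - apply (Sig_approach_set X d Hmetric s xa xb Sig HSigma).
Qed.

(* The empirical distribution of the points [approach (pts i t) k] for
   [t < size i] and [k < horizon i]; it is [0] on a degenerate sample. *)
Definition emp (i : sample) (E : pset X) : R :=
  fsum (size i) (fun t => visits (pts i t) E (horizon i)) / (INR (size i) * INR (horizon i)).

Lemma emp_bounds i E : 0 <= emp i E <= 1.
Proof.
  unfold emp. set (S := fsum _ _). set (D := INR (size i) * INR (horizon i)).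
  assert (HS : 0 <= S <= D).
  { split; [apply fsum_nonneg|apply fsum_le_bound]; intros; apply visits_bounds. }
  destruct (Req_dec D 0) as [HD|HD]; [rewrite HD, Rdiv_0_r; lra|].
  assert (0 < D) by lra. split; [apply Rle_mult_inv_pos; lra|].
  apply (Rmult_le_reg_r D); [lra|]. field_simplify; lra.
Qed.

Lemma emp_or i E F : (forall w, E w -> F w -> False) ->
  emp i (fun w => E w \/ F w) = emp i E + emp i F.
Proof.
  intros Hd. unfold emp, Rdiv. rewrite <- Rmult_plus_distr_r, <- fsum_add. f_equal.
  apply fsum_ext. intros t _. now apply visits_or.
Qed.

Lemma emp_full i : (0 < size i)%nat -> (0 < horizon i)%nat -> emp i full = 1.
Proof.
  intros Hs Hh. unfold emp.
  rewrite (fsum_ext _ _ (fun _ => INR (horizon i) * 1)).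
  - rewrite fsum_const. field. split; apply not_0_INR; lia.
  - intros t _. unfold visits. rewrite <- fsum_const. apply fsum_ext.
    intros; now apply indic_true.
Qed.

Lemma emp_select i E al : 0 <= al <= 1 -> (0 < size i)%nat -> (0 < horizon i)%nat ->
  Rabs (al * emp i E - emp i (select E al)) <= / INR (horizon i).
Proof.
  intros Hal Hs Hh.
  assert (HN : 0 < INR (size i)) by (apply lt_0_INR; lia).
  assert (Hn : 0 < INR (horizon i)) by (apply lt_0_INR; lia).
  set (frac := fun t => al * visits (pts i t) E (horizon i)
                        - IZR (Int_part (al * visits (pts i t) E (horizon i)))).
  assert (Hfrac : forall t, 0 <= frac t <= 1).
  { intros t. unfold frac. destruct (base_Int_part (al * visits (pts i t) E (horizon i))). lra. }
  assert (Hdiff : al * emp i E - emp i (select E al)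
                  = fsum (size i) frac / (INR (size i) * INR (horizon i))).
  { unfold emp. rewrite (fsum_ext _ (fun t => visits _ (select E al) _)
      (fun t => IZR (Int_part (al * visits (pts i t) E (horizon i)))))
      by (intros; now apply visits_select).
    unfold frac. unfold Rminus at 2. rewrite fsum_add.
    rewrite (fsum_ext _ (fun t => - _) (fun t => -1 * IZR (Int_part (al * visits (pts i t) E (horizon i)))))
      by (intros; ring).
    rewrite !fsum_scal. field. lra. }
  assert (HS : 0 <= fsum (size i) frac <= INR (size i)).
  { split; [apply fsum_nonneg|rewrite <- (Rmult_1_r (INR (size i))); apply fsum_le_bound];
      intros; apply Hfrac. }
  rewrite Hdiff, Rabs_pos_eq by (apply Rle_mult_inv_pos; nra).
  apply (Rmult_le_reg_r (INR (size i) * INR (horizon i))); [nra|].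
  field_simplify; lra.
Qed.

Lemma emp_lower_bound (U : pset X) i (K : nat) (q : R) :
  (0 < size i)%nat -> (0 < horizon i)%nat -> (K <= horizon i)%nat -> 0 <= q ->
  (forall t, (t < size i)%nat -> U (dense_path X s (pts i t)) ->
     forall k, (K <= k)%nat -> U (approach (pts i t) k)) ->
  q * INR (size i) <= fsum (size i) (fun t => indic (U (dense_path X s (pts i t)))) ->
  q * (1 - INR K / INR (horizon i)) <= emp i U.
Proof.
  intros Hs Hh HK Hq Htail Hfreq.
  assert (HN : 0 < INR (size i)) by (apply lt_0_INR; lia).
  assert (Hn : 0 < INR (horizon i)) by (apply lt_0_INR; lia).
  assert (HKn : INR K <= INR (horizon i)) by now apply le_INR.
  assert (Hvisits : (INR (horizon i) - INR K) *
      fsum (size i) (fun t => indic (U (dense_path X s (pts i t))))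
      <= fsum (size i) (fun t => visits (pts i t) U (horizon i))).
  { rewrite <- fsum_scal. apply fsum_le. intros t Ht.
    destruct (classic (U (dense_path X s (pts i t)))) as [Hin|Hout].
    - rewrite indic_true, Rmult_1_r by exact Hin.
      exact (visits_tail (pts i t) U K (Htail t Ht Hin) (horizon i)).
    - rewrite indic_false, Rmult_0_r by exact Hout. apply visits_bounds. }
  unfold emp. apply (Rmult_le_reg_r (INR (size i) * INR (horizon i))); [nra|].
  replace (q * (1 - INR K / INR (horizon i)) * (INR (size i) * INR (horizon i)))
    with ((INR (horizon i) - INR K) * (q * INR (size i))) by (field; lra).
  replace (fsum (size i) (fun t => visits (pts i t) U (horizon i)) /
      (INR (size i) * INR (horizon i)) * (INR (size i) * INR (horizon i)))
    with (fsum (size i) (fun t => visits (pts i t) U (horizon i))) by (field; lra).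
  eapply Rle_trans; [|exact Hvisits]. apply Rmult_le_compat_l; lra.
Qed.

End Empirical.

(** * The limit opinion *)

Section SampleLimit.
Variables (X : Type) (d : X -> X -> R).
Hypothesis Hmetric : is_metric d.
Variables (s : nat -> X) (xa xb : X).
Hypothesis Hxab : xa <> xb.
Variable Sig : pset X -> Prop.
Hypothesis HSigma : sigma_alg_opens d Sig.
Variable W : (sample -> Prop) -> Prop.
Hypothesis HW : ultra W.
Hypothesis HWsize : W (fun i => (0 < size i)%nat).
Hypothesis HWhorizon : forall K, W (fun i => (K <= horizon i)%nat).

Notation emp := (emp X s xa xb).

Definition sample_limit (E : pset X) : R := ulim W (fun i => emp i E).

Lemma emp_ubounded E : ubounded (fun i => emp i E).
Proof.
  exists 1. intros i. pose proof (emp_bounds X s xa xb i E). rewrite Rabs_pos_eq; lra.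
Qed.

Lemma sample_limit_ge0 E : 0 <= sample_limit E.
Proof.
  apply (ulim_ge W HW); [apply emp_ubounded|].
  apply (ultra_forall W HW). intros i. apply emp_bounds.
Qed.

Lemma sample_limit_full : sample_limit full = 1.
Proof.
  apply (ulim_ev_const W HW).
  apply (ultra_impl2 W HW _ _ _ HWsize (HWhorizon 1)). intros i Hs Hh. now apply emp_full.
Qed.

Lemma sample_limit_or E F : (forall w, E w -> F w -> False) ->
  sample_limit (fun w => E w \/ F w) = sample_limit E + sample_limit F.
Proof.
  intros Hd. unfold sample_limit. rewrite <- (ulim_add W HW) by apply emp_ubounded.
  f_equal. apply functional_extensionality. intros i. now apply emp_or.
Qed.

Lemma sample_limit_nonatomic : strongly_nonatomic Sig sample_limit.
Proof.
  intros E al _ Hal. exists (select X s xa xb E al).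
  split; [now apply (Sig_select X d Hmetric s xa xb Hxab Sig HSigma)|].
  split; [intros w [HE _]; exact HE|].
  unfold sample_limit. rewrite <- (ulim_scal W HW) by apply emp_ubounded.
  apply (ulim_close W HW).
  { destruct (emp_ubounded E) as [B HB]. exists (Rabs al * B). intros i.
    rewrite Rabs_mult. apply Rmult_le_compat_l; [apply Rabs_pos|apply HB]. }
  intros eta Heta. destruct (nat_above (/ eta)) as [K HK].
  assert (HKpos : 0 < INR K) by (pose proof (Rinv_0_lt_compat eta Heta); lra).
  apply (ultra_impl2 W HW _ _ _ HWsize (HWhorizon K)). intros i Hs Hh.
  assert (Hh0 : (0 < horizon i)%nat) by (apply INR_lt; simpl; apply le_INR in Hh; lra).
  eapply Rle_lt_trans; [apply (emp_select X s xa xb Hxab); auto|].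
  apply Rle_lt_trans with (/ INR K).
  - apply Rinv_le_contravar; [exact HKpos|now apply le_INR].
  - rewrite <- (Rinv_inv eta). apply Rinv_lt_contravar; [|exact HK].
    apply Rmult_lt_0_compat; [apply Rinv_0_lt_compat|]; lra.
Qed.

Lemma sample_limit_opinion : exists P : DeltaStar Sig, forall E, uncond P E = sample_limit E.
Proof.
  apply (extend_to_opinion X Sig xa xb Hxab).
  - apply sample_limit_ge0.
  - apply sample_limit_full.
  - apply sample_limit_or.
  - apply sample_limit_nonatomic.
Qed.

End SampleLimit.

Section Refutation.
Variables (X : Type) (d : X -> X -> R).
Hypothesis Hmetric : is_metric d.
Variable s : nat -> X.
Hypothesis Hdense : forall x eps, 0 < eps -> exists n, d x (s n) < eps.
Variables xa xb : X.
Hypothesis Hxab : xa <> xb.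
Variable Sig : pset X -> Prop.
Hypothesis HSigma : sigma_alg_opens d Sig.
Variable T : DeltaStar Sig -> pset X.
Hypothesis HTopen : forall P, is_open d (T P).
Variable c : R.
Hypothesis Hc : 0 < c <= 1.
Hypothesis Hhit : forall n (pt : nat -> DeltaStar Sig) (wt : nat -> R),
  (forall i, (i < n)%nat -> 0 <= wt i) -> fsum n wt = 1 ->
  exists w, c < fsum n (fun i => wt i * indic (T (pt i) w)).
Variables a b : nat.
Hypothesis Hb : (1 <= b)%nat.
Hypothesis Hab : INR a < INR b * c.

Notation dense_path := (dense_path X s).
Notation approach := (approach X s xa xb).

Definition covers (L : list (DeltaStar Sig)) (N : nat) (ms : nat -> nat) : Prop :=
  (0 < N)%nat /\ Forall (fun P =>
    INR a * INR N <= INR b * fsum N (fun t => indic (T P (dense_path (ms t))))) L.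

Lemma exists_cover L : exists N ms, covers L N ms.
Proof.
  destruct L as [|P0 L'].
  { exists 1%nat, (fun _ => 0%nat). split; [lia|constructor]. }
  set (L := P0 :: L'). set (pt := fun j => nth j L P0).
  destruct (uniform_hitting_plays (length L) (fun j m => T (pt j) (dense_path m)) c a b Hc Hb Hab)
    as [N [ms [HN Hcov]]].
  - intros wt Hw Hsum. destruct (Hhit (length L) pt wt Hw Hsum) as [w Hw'].
    destruct (dense_path_in_opens X d s Hdense (length L) (fun j => T (pt j)) w
      (fun j => HTopen (pt j))) as [m Hm].
    exists m. eapply Rlt_le_trans; [exact Hw'|]. apply fsum_le. intros j Hj.
    apply Rmult_le_compat_l; [now apply Hw|]. apply indic_mono. now apply Hm.
  - exists N, ms. split; [exact HN|]. apply Forall_forall. intros P HP.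
    destruct (In_nth L P P0 HP) as [j [Hj <-]]. now apply Hcov.
Qed.

Definition tail_time (P : DeltaStar Sig) (N : nat) (ms : nat -> nat) : nat :=
  epsilon (inhabits 0%nat) (fun K => forall t, (t < N)%nat -> forall k, (K <= k)%nat ->
    T P (dense_path (ms t)) -> T P (approach (ms t) k)).

Lemma tail_time_spec P N ms : forall t, (t < N)%nat -> forall k, (tail_time P N ms <= k)%nat ->
  T P (dense_path (ms t)) -> T P (approach (ms t) k).
Proof.
  unfold tail_time. apply epsilon_spec.
  apply (eventually_forall_lt (fun t k => T P (dense_path (ms t)) -> T P (approach (ms t) k))).
  intros t _. destruct (classic (T P (dense_path (ms t)))) as [Hin|Hout].
  - destruct (approach_eventually_in X d Hmetric s xa xb _ _ (HTopen P) Hin) as [K HK].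
    exists K. auto.
  - exists 0%nat. intros k _ Hin. contradiction.
Qed.

(* The horizon bound [f] depends on the sample: it must exceed the times after
   which the sample's approaching paths stay in the relevant open sets. *)
Definition sample_filter (A : sample -> Prop) : Prop :=
  exists (L : list (DeltaStar Sig)) (f : nat -> (nat -> nat) -> nat),
    forall i, covers L (size i) (pts i) -> (f (size i) (pts i) <= horizon i)%nat -> A i.

Lemma sample_ultrafilter : exists W, ultra W /\ forall A, sample_filter A -> W A.
Proof.
  apply ultra_extend.
  - intros A B HAB [L [f HL]]. exists L, f. auto.
  - intros A B [L1 [f1 H1]] [L2 [f2 H2]].
    exists (L1 ++ L2), (fun N ms => Nat.max (f1 N ms) (f2 N ms)).
    intros i [HN Hcov] Hf. apply Forall_app in Hcov as [Hcov1 Hcov2].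
    split; [apply H1|apply H2]; try (split; assumption); lia.
  - exists nil, (fun _ _ => 0%nat). auto.
  - intros [L [f HL]]. destruct (exists_cover L) as [N [ms Hcov]].
    exact (HL (Sample N ms (f N ms)) Hcov (le_n _)).
Qed.

Lemma sample_limit_test_lower W : ultra W -> (forall A, sample_filter A -> W A) ->
  forall P, INR a / INR b <= sample_limit X s xa xb W (T P).
Proof.
  intros HW HWf P.
  assert (HbR : 0 < INR b) by (apply lt_0_INR; lia).
  set (q := INR a / INR b).
  assert (Hq : 0 <= q <= 1).
  { unfold q. split; [apply Rle_mult_inv_pos; [apply pos_INR|exact HbR]|].
    apply (Rmult_le_reg_r (INR b)); [exact HbR|]. field_simplify; nra. }
  apply le_epsilon. intros eta Heta.
  destruct (nat_above (/ eta)) as [k0 Hk0].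
  assert (Hk0eta : 1 < eta * INR k0).
  { apply (Rmult_lt_compat_l eta) in Hk0; [|exact Heta]. rewrite Rinv_r in Hk0; lra. }
  assert (Hk0pos : (1 <= k0)%nat).
  { destruct k0; [simpl in Hk0eta; lra|lia]. }
  cut (q - eta <= sample_limit X s xa xb W (T P)); [lra|].
  apply (ulim_ge W HW); [apply emp_ubounded|].
  apply HWf. exists (P :: nil), (fun N ms => tail_time P N ms * k0 + 1)%nat.
  intros i [HN Hcov] Hf. set (K := tail_time P (size i) (pts i)) in Hf.
  assert (HKn : INR K * INR k0 + 1 <= INR (horizon i)).
  { rewrite <- mult_INR, <- S_INR, <- Nat.add_1_r. now apply le_INR. }
  assert (HKeta : INR K <= eta * INR (horizon i)).
  { pose proof (pos_INR K). nra. }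
  assert (Hn : 0 < INR (horizon i)) by (pose proof (pos_INR K); pose proof (pos_INR k0); nra).
  apply Rle_trans with (q * (1 - INR K / INR (horizon i))).
  { assert (INR K / INR (horizon i) <= eta).
    { apply (Rmult_le_reg_r (INR (horizon i))); [exact Hn|]. field_simplify; lra. }
    assert (0 <= INR K / INR (horizon i)) by (apply Rle_mult_inv_pos; [apply pos_INR|exact Hn]).
    nra. }
  apply emp_lower_bound; [exact HN|lia|nia|lra| |].
  - intros t Ht Hin k Hk. exact (tail_time_spec P _ _ t Ht k Hk Hin).
  - apply Forall_inv in Hcov. unfold q.
    apply (Rmult_le_reg_l (INR b)); [exact HbR|].
    replace (INR b * (INR a / INR b * INR (size i))) with (INR a * INR (size i))
      by (field; lra). exact Hcov.
Qed.

Lemma opinion_exceeding_test : exists P : DeltaStar Sig, INR a / INR b <= uncond P (T P).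
Proof.
  destruct sample_ultrafilter as [W [HW HWf]].
  assert (HWsize : W (fun i => (0 < size i)%nat)).
  { apply HWf. exists nil, (fun _ _ => 0%nat). now intros i [HN _] _. }
  assert (HWhorizon : forall K, W (fun i => (K <= horizon i)%nat)).
  { intros K. apply HWf. exists nil, (fun _ _ => K). auto. }
  destruct (sample_limit_opinion X d Hmetric s xa xb Hxab Sig HSigma W HW HWsize HWhorizon)
    as [P HP].
  exists P. rewrite HP. now apply sample_limit_test_lower.
Qed.

End Refutation.

Lemma exists_ratio_between x y : 0 <= x < y ->
  exists a b : nat, (1 <= b)%nat /\ INR b * x < INR a /\ INR a < INR b * y.
Proof.
  intros Hxy.
  destruct (nat_above (/ (y - x))) as [b0 Hb0].
  set (b := S b0).
  assert (Hgap : 1 < INR b * (y - x)).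
  { assert (HbR : INR b0 < INR b) by (apply lt_INR; unfold b; lia).
    apply Rle_lt_trans with (/ (y - x) * (y - x)); [rewrite Rinv_l; lra|].
    apply Rmult_lt_compat_r; lra. }
  destruct (archimed (INR b * x)) as [Hup1 Hup2].
  assert (Hpos : (0 < up (INR b * x))%Z).
  { assert (0 <= INR b * x) by (apply Rmult_le_pos; [apply pos_INR|lra]).
    apply lt_IZR. lra. }
  exists (Z.to_nat (up (INR b * x))), b.
  rewrite (INR_IZR_INZ (Z.to_nat _)), Znat.Z2Nat.id by lia.
  split; [unfold b; lia|]. split; lra.
Qed.

Lemma mixture_hits_of_no_safe_mixture {X A : Type} (T : A -> pset X) (e delta : R) :
  ~ (exists (n : nat) (pt : nat -> A) (wt : nat -> R),
      (forall i, (i < n)%nat -> 0 <= wt i) /\ fsum n wt = 1 /\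
      forall w : path X, fsum n (fun i => wt i * indic (~ T (pt i) w)) >= 1 - e - delta) ->
  forall n (pt : nat -> A) (wt : nat -> R),
    (forall i, (i < n)%nat -> 0 <= wt i) -> fsum n wt = 1 ->
    exists w, e + delta < fsum n (fun i => wt i * indic (T (pt i) w)).
Proof.
  intros Hnone n pt wt Hw Hsum. apply NNPP. intros Hall. apply Hnone.
  exists n, pt, wt. split; [exact Hw|split; [exact Hsum|]]. intros w.
  assert (Hle : fsum n (fun i => wt i * indic (T (pt i) w)) <= e + delta)
    by (apply Rnot_lt_le; intros H; apply Hall; now exists w).
  rewrite (fsum_ext n _ (fun i => wt i + -1 * (wt i * indic (T (pt i) w))))
    by (intros; rewrite indic_not; ring).
  rewrite fsum_add, fsum_scal, Hsum. lra.
Qed.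

Theorem theorem5
  (X : Type) (d : X -> X -> R)
  (Hmetric : is_metric d) (Hsep : separable d)
  (Htwo : exists x y : X, x <> y)
  (Sig : pset X -> Prop) (HSigma : sigma_alg_opens d Sig)
  (eps : R) (Heps : 0 <= eps < 1)
  (T : DeltaStar Sig -> pset X)
  (HTopen : forall P, is_open d (T P))
  (HTsize : forall P, uncond P (T P) <= eps) :
  forall delta : R, 0 < delta <= 1 - eps ->
  exists (n : nat) (pt : nat -> DeltaStar Sig) (wt : nat -> R),
    (forall i, (i < n)%nat -> 0 <= wt i) /\
    fsum n wt = 1 /\
    forall omega : path X,
      fsum n (fun i => wt i * indic (~ T (pt i) omega)) >= 1 - eps - delta.
Proof.
  intros delta Hdelta.
  destruct Htwo as [xa [xb Hxab]]. destruct Hsep as [s Hdense].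
  apply NNPP. intros Hnone.
  destruct (exists_ratio_between eps (eps + delta) ltac:(lra)) as [a [b [Hb [Hlo Hhi]]]].
  destruct (opinion_exceeding_test X d Hmetric s Hdense xa xb Hxab Sig HSigma T HTopen
    (eps + delta) ltac:(lra) (mixture_hits_of_no_safe_mixture T eps delta Hnone) a b Hb Hhi)
    as [P HP].
  pose proof (HTsize P) as Hsmall.
  assert (HbR : 0 < INR b) by (apply lt_0_INR; lia).
  assert (eps < INR a / INR b).
  { apply (Rmult_lt_reg_r (INR b)); [exact HbR|]. field_simplify; lra. }
  lra.
Qed.
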